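(* Let $\mathcal{P}_{n,k}$ be the set of all CPWL functions $p\colon\mathbb{R}^n\to\mathbb{R}$ with exactly $k$ distinct linear components, and for $p\in\mathcal{P}_{n,k}$ let $\mathcal{C}_{n,k}(p)$ be the collection of all families of closed convex subsets of $\mathbb{R}^n$ whose union is $\mathbb{R}^n$ and on each of which $p$ is affine. Then $k\leq\min_{\mathcal{Q}\in\mathcal{C}_{n,k}(p)}|\mathcal{Q}|\leq\phi(n,k)$, where $\phi(n,k)=\min\left(\sum_{i=0}^n \binom{(k^2-k)/2}{i},\,k!\right)$.
   Context: A function $p\colon\mathbb{R}^n\to\mathbb{R}$ is CPWL (continuous piecewise linear) if there exist finitely many closed subsets $\mathcal{U}_1,\dots,\mathcal{U}_m$ of $\mathbb{R}^n$ whose union is $\mathbb{R}^n$ and such that $p$ is affine on each $\mathcal{U}_i$. An affine function $f$ is a linear component of $p$ if there is a nonempty subfamily of a minimum-size family of such closed subsets on whose union $f=p$. *)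

From HB Require Import structures.
From mathcomp Require Import all_boot all_order all_algebra.
From mathcomp Require Import all_classical all_reals all_analysis.
Set Implicit Arguments. Unset Strict Implicit. Unset Printing Implicit Defensive.
Import Order.TTheory GRing.Theory Num.Theory numFieldNormedType.Exports.
Local Open Scope classical_set_scope.
Local Open Scope ring_scope.

Definition affine_fun (R : realType) (n : nat) (f : 'rV[R]_n -> R) : Prop :=
  exists (a : 'rV[R]_n) (b : R), forall x, f x = \sum_(i < n) a 0 i * x 0 i + b.

Definition affine_on (R : realType) (n : nat) (p : 'rV[R]_n -> R)
  (A : set 'rV[R]_n) : Prop :=
  exists f, affine_fun f /\ (forall x, A x -> p x = f x).

Definition closed_cover (R : realType) (n : nat) (p : 'rV[R]_n -> R)
  (m : nat) (U : 'I_m -> set 'rV[R]_n) : Prop :=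
  (forall i, closed (U i)) /\ \bigcup_(i in [set: 'I_m]) U i = [set: 'rV[R]_n] /\
  (forall i, affine_on p (U i)).

Definition convex_set_R (R : realType) (n : nat) (A : set 'rV[R]_n) : Prop :=
  forall x y (t : R), A x -> A y -> 0 <= t -> t <= 1 ->
    A (t *: x + (1 - t) *: y).

Definition convex_cover (R : realType) (n : nat) (p : 'rV[R]_n -> R)
  (m : nat) (U : 'I_m -> set 'rV[R]_n) : Prop :=
  closed_cover p U /\ (forall i, convex_set_R (U i)).

Definition is_CPWL (R : realType) (n : nat) (p : 'rV[R]_n -> R) : Prop :=
  exists m (U : 'I_m -> set 'rV[R]_n), closed_cover p U.

Definition min_cover_size (R : realType) (n : nat) (p : 'rV[R]_n -> R)
  (m : nat) : Prop :=
  (exists U : 'I_m -> set 'rV[R]_n, closed_cover p U) /\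
  (forall m' (U : 'I_m' -> set 'rV[R]_n), closed_cover p U -> (m <= m')%N).

Definition linear_component (R : realType) (n : nat) (p : 'rV[R]_n -> R)
  (f : 'rV[R]_n -> R) : Prop :=
  affine_fun f /\
  exists m (U : 'I_m -> set 'rV[R]_n) (S : {set 'I_m}),
    min_cover_size p m /\ closed_cover p U /\ S != finset.set0 /\
    (forall x, (\bigcup_(i in [set i | i \in S]) U i) x -> f x = p x).

Definition num_linear_components (R : realType) (n : nat) (p : 'rV[R]_n -> R)
  (k : nat) : Prop :=
  exists g : 'I_k -> ('rV[R]_n -> R), injective g /\
    (forall f, linear_component p f <-> exists i, f = g i).

Definition in_P (R : realType) (n k : nat) (p : 'rV[R]_n -> R) : Prop :=
  is_CPWL p /\ num_linear_components p k.

Definition phi (n k : nat) : nat :=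
  minn (\sum_(i < n.+1) 'C((k ^ 2 - k) %/ 2, i)) k`!.

From mathcomp Require Import all_boot all_order all_algebra all_fingroup.
From mathcomp Require Import all_classical all_reals all_analysis.
From mathcomp Require Import ring lra.
(* Re-imported so that their lemma names take precedence over the homonymous
   ones of classical_sets. *)
From mathcomp Require Import fintype finset.
Set Implicit Arguments. Unset Strict Implicit. Unset Printing Implicit Defensive.
Import Order.TTheory GRing.Theory Num.Theory numFieldNormedType.Exports.

(* Lower bound: in a minimal closed cover every piece has nonempty interior,
   and a nonempty open set covered by finitely many closed sets meets the
   interior of one of them.  As an affine function is determined by its values
   on an open set, each linear component of p is the affine piece of p on some
   piece with nonempty interior of any closed cover, and distinct components
   need distinct pieces.

   Upper bound: at a generic point y, where the k components g_i take distinct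
   values, record which of the inequalities g_i y < g_j y hold.  The closed cell
   of such a pattern is convex; p agrees with a single component on it, since
   along the segment from y to a point of the cell every point but the last is
   generic with the same pattern, so connectedness keeps p on one component; and
   the cells cover R^n, by a small generic perturbation of any point.  Patterns
   are orderings of the components, whence at most k! of them.  Restricted to the
   (k^2 - k)/2 pairs i < j they form a set family shattering no set of more than
   n pairs: the slopes of n + 1 differences g_j - g_i are linearly dependent,
   and the dependency forbids one sign pattern.  The Sauer-Shelah lemma bounds
   their number by sum_(i <= n) 'C((k^2 - k)/2, i). *)

Lemma exists_perm_lt d (T : orderType d) k (h : 'I_k -> T) :
  injective h -> exists s : 'S_k, forall i j, (h i < h j)%O = (s i < s j).
Proof.
move=> h_inj; pose rk i := #|[set j | (h j < h i)%O]|.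
have rk_lt i : rk i < k.
  rewrite -[k]card_ord -cardsT; apply: proper_card; rewrite properT.
  by apply/eqP => /setP/(_ i); rewrite !inE ltxx.
have rk_mono i j : (h i < h j)%O -> rk i < rk j.
  move=> hij; apply: proper_card; apply/properP.
  split; last by exists i; rewrite !inE ?hij ?ltxx.
  by apply/subsetP => l; rewrite !inE => /lt_trans; apply.
have rkE i j : (h i < h j)%O = (rk i < rk j).
  case: (ltgtP (h i) (h j)) => [/rk_mono -> // | /rk_mono/ltnW | /h_inj ->].
    by rewrite leqNgt => /negbTE.
  by rewrite ltnn.
have rk_inj : injective (fun i => Ordinal (rk_lt i)).
  move=> i j /(congr1 val) /= rij; apply: h_inj; apply/eqP.
  by rewrite eq_le !leNgt !rkE rij ltnn.
by exists (perm rk_inj) => i j; rewrite !permE rkE.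
Qed.

Lemma ex_minn_Prop (P : nat -> Prop) N :
  P N -> exists2 m, P m & forall m', P m' -> m <= m'.
Proof.
move=> PN; have ex : exists m, `[< P m >] by exists N; apply/asboolP.
exists (ex_minn ex); case: ex_minnP => m /asboolP // _ min_m m' /asboolP.
exact: min_m.
Qed.

(** * Shattering and the Sauer-Shelah lemma *)

Section Shattering.
Variable T : finType.
Implicit Types (x : T) (A B S U : {set T}) (F : {set {set T}}).

Definition shatters F A :=
  [forall B : {set T}, (B \subset A) ==> [exists S in F, S :&: A == B]].

Lemma shattersP F A :
  reflect (forall B, B \subset A -> exists2 S, S \in F & S :&: A = B) (shatters F A).
Proof.
apply: (iffP forallP) => [sh B sBA | sh B]; last first.
  by apply/implyP=> /sh[S FS SA]; apply/existsP; exists S; rewrite FS SA eqxx.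
by have /implyP/(_ sBA)/existsP[S /andP[FS /eqP SA]] := sh B; exists S.
Qed.

Lemma shatters_sub F A : shatters F A -> exists2 S, S \in F & A \subset S.
Proof.
by move/shattersP/(_ A (subxx A)) => [S FS SA]; exists S; rewrite // -SA subsetIl.
Qed.

Lemma shatters_notin F A x :
  (forall S, S \in F -> x \notin S) -> shatters F A -> x \notin A.
Proof.
move=> xF /shatters_sub[S /xF xS sAS]; exact: contra (subsetP sAS x) xS.
Qed.

Lemma setD1_notin x S : x \notin S -> S :\ x = S.
Proof. by move=> xS; apply/setDidPl; rewrite disjoint_sym disjoints1. Qed.

Section PajorStep.
Variables (F : {set {set T}}) (x : T).

Definition shadow := [set S :\ x | S in F].
Definition twins := [set S in F | (x \notin S) && (x |: S \in F)].

Lemma card_shadow_twins : #|shadow| + #|twins| = #|F|.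
Proof.
pose Fx := F :&: [set S : {set T} | x \in S].
pose Fout := F :\: [set S : {set T} | x \in S].
pose Fin := [set S :\ x | S in Fx].
have shadowE : shadow = Fout :|: Fin.
  apply/setP=> S; apply/idP/idP => [/imsetP[S' FS' ->]|/setUP[]].
  - case: (boolP (x \in S')) => xS'; last by rewrite setD1_notin // !inE FS' xS'.
    by rewrite inE; apply/orP; right; apply/imsetP; exists S'; rewrite // !inE FS'.
  - by rewrite !inE => /andP[xS FS]; apply/imsetP; exists S; rewrite // setD1_notin.
  - by move=> /imsetP[S' /setIP[FS' _] ->]; apply/imsetP; exists S'.
have twinsE : twins = Fout :&: Fin.
  apply/setP=> S; rewrite !inE; apply/andP/andP => [[FS /andP[xS xSF]]|].
    split; first by rewrite xS FS.
    by apply/imsetP; exists (x |: S); rewrite ?setU1K // !inE xSF eqxx.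
  move=> [/andP[xS FS] /imsetP[S' /setIP[FS']]]; rewrite inE => xS' E.
  by rewrite FS xS E setD1K.
have cardFin : #|Fin| = #|Fx|.
  apply: card_in_imset => S1 S2; rewrite !inE => /andP[_ xS1] /andP[_ xS2] E.
  by rewrite -(setD1K xS1) E setD1K.
by rewrite shadowE twinsE cardsUI cardFin addnC cardsID.
Qed.

Lemma notin_shadow S : S \in shadow -> x \notin S.
Proof. by move=> /imsetP[S' _ ->]; rewrite setD11. Qed.

Lemma notin_twins S : S \in twins -> x \notin S.
Proof. by rewrite inE => /andP[_ /andP[]]. Qed.

Lemma shatters_shadow A : shatters shadow A -> shatters F A.
Proof.
move=> /[dup]/(shatters_notin notin_shadow) xA /shattersP sh; apply/shattersP => B /sh.
move=> [_ /imsetP[S FS ->] <-]; exists S => //.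
by apply/setP=> y; rewrite !inE; case: eqP => // ->; rewrite (negPf xA) andbF.
Qed.

Lemma shatters_twins A : shatters twins A -> shatters F (x |: A).
Proof.
move=> /[dup]/(shatters_notin notin_twins) xA /shattersP sh; apply/shattersP => B sBxA.
have sBA : B :\ x \subset A.
  by apply/subsetP=> y; rewrite !inE => /andP[yx /(subsetP sBxA)]; rewrite !inE (negPf yx).
have [S] := sh _ sBA; rewrite inE => /andP[FS /andP[xS xSF]] SA.
case: (boolP (x \in B)) => xB.
  by exists (x |: S); rewrite // -setUIr SA setD1K.
exists S => //; rewrite setIUr SA setD1_notin // [S :&: _]setIC.
by rewrite disjoint_setI0 ?set0U ?disjoints1.
Qed.

Lemma card_shatters_shadow_twins :
  #|[set A | shatters shadow A]| + #|[set A | shatters twins A]|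
    <= #|[set A | shatters F A]|.
Proof.
set Sh1 := [set A | shatters shadow A]; set Sh2 := [set A | shatters twins A].
have -> : #|Sh2| = #|[set x |: A | A in Sh2]|.
  apply/esym/card_in_imset => A1 A2; rewrite !inE.
  move=> /(shatters_notin notin_twins) xA1 /(shatters_notin notin_twins) xA2 E.
  by rewrite -(setU1K xA1) E setU1K.
have disj : [disjoint Sh1 & [set x |: A | A in Sh2]].
  apply/pred0P => A /=; apply/negbTE/negP => /andP[].
  rewrite inE => /(shatters_notin notin_shadow) xA /imsetP[A' _ EA].
  by rewrite EA setU11 in xA.
rewrite -cardsUI (disjoint_setI0 disj) cards0 addn0.
apply: subset_leq_card; rewrite subUset; apply/andP; split; apply/subsetP.
  by move=> A; rewrite !inE; apply: shatters_shadow.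
by move=> A' /imsetP[A]; rewrite inE => shA ->; apply: shatters_twins; rewrite inE in shA.
Qed.

End PajorStep.

Lemma pajor U F :
  (forall S, S \in F -> S \subset U) -> #|F| <= #|[set A | shatters F A]|.
Proof.
move=> sFU; have [N leUN] := ubnP #|U|.
elim: N => // N IH in U F sFU leUN *; rewrite ltnS in leUN.
case: (set_0Vmem U) => [U0|[x Ux]].
  have sF0 : F \subset [set set0].
    by apply/subsetP => S /sFU; rewrite U0 subset0 inE.
  case: (set_0Vmem F) => [->|[S FS]]; first by rewrite cards0.
  rewrite (leq_trans (subset_leq_card sF0)) // cards1 card_gt0.
  apply/set0Pn; exists set0; rewrite inE; apply/shattersP => B.
  by rewrite subset0 => /eqP ->; exists S; rewrite ?setI0.
have ltUxN : #|U :\ x| < N by rewrite (cardsD1 x U) Ux in leUN.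
have sub_shadow S : S \in shadow F x -> S \subset U :\ x.
  by move=> /imsetP[S' /sFU sS'U ->]; apply: setSD.
have sub_twins S : S \in twins F x -> S \subset U :\ x.
  by rewrite subsetD1 inE => /andP[/sFU -> /andP[-> _]].
rewrite -(card_shadow_twins F x); apply: leq_trans (card_shatters_shadow_twins F x).
exact: leq_add (IH _ _ sub_shadow ltUxN) (IH _ _ sub_twins ltUxN).
Qed.

Lemma card_small_subsets U d :
  #|[set A : {set T} | A \subset U & #|A| <= d]| = \sum_(i < d.+1) 'C(#|U|, i).
Proof.
elim: d => [|d IH].
  by rewrite big_ord_recr big_ord0 -cards_draws; apply: eq_card => A; rewrite !inE leqn0.
rewrite big_ord_recr /= -IH -cards_draws -cardsUI.
set X := _ :&: _; have -> : X = set0.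
  apply/setP => A; rewrite !inE; case: (A \subset U) => //=.
  by case: eqP => [->|]; rewrite ?ltnn ?andbF ?andbT.
rewrite cards0 addn0; apply: eq_card => A; rewrite !inE leq_eqVlt ltnS.
by case: (A \subset U); rewrite //= orbC.
Qed.

Lemma sauer_shelah U F d :
  (forall S, S \in F -> S \subset U) -> (forall A, shatters F A -> #|A| <= d) ->
  #|F| <= \sum_(i < d.+1) 'C(#|U|, i).
Proof.
move=> sFU leFd; rewrite -card_small_subsets; apply: leq_trans (pajor sFU) _.
apply/subset_leq_card/subsetP => A; rewrite !inE => shA; rewrite leFd // andbT.
by have [S /sFU sSU sAS] := shatters_sub shA; apply: subset_trans sSU.
Qed.

End Shattering.

Local Open Scope classical_set_scope.
Local Open Scope ring_scope.

(** * Affine functions on R^n *)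

Section AffineFunctions.
Variables (R : realType) (n : nat).
Local Notation V := 'rV[R]_n.
Implicit Types (a x y v : V) (f h : V -> R).

Definition dot a x : R := \sum_(i < n) a 0 i * x 0 i.

Lemma dotDr a x y : dot a (x + y) = dot a x + dot a y.
Proof. by rewrite /dot -big_split; apply: eq_bigr => i _; rewrite mxE mulrDr. Qed.

Lemma dotZr a t x : dot a (t *: x) = t * dot a x.
Proof. by rewrite /dot mulr_sumr; apply: eq_bigr => i _; rewrite mxE mulrCA. Qed.

Lemma dotBl a a' x : dot (a - a') x = dot a x - dot a' x.
Proof. by rewrite /dot -sumrB; apply: eq_bigr => i _; rewrite !mxE mulrBl. Qed.

Lemma dot_continuous a : continuous (dot a).
Proof.
apply: continuous_big => [|i _]; first exact: add_continuous.
by move=> x; apply: cvgMl_tmp; [exact: nbhs_filter | exact: coord_continuous].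
Qed.

Lemma affine_fun_continuous f : affine_fun f -> continuous f.
Proof.
move=> [a [b fE]] x; rewrite (funext fE).
by apply: cvgD; [exact: nbhs_filter | exact: dot_continuous | exact: cst_continuous].
Qed.

Lemma affine_funB f h : affine_fun f -> affine_fun h -> affine_fun (f \- h).
Proof.
move=> [a [b fE]] [a' [b' hE]]; exists (a - a'), (b - b') => x.
change (f x - h x = dot (a - a') x + (b - b')).
by rewrite dotBl fE hE /dot; ring.
Qed.

Lemma affine_fun_line f :
  affine_fun f -> exists a, forall x v t, f (x + t *: v) = f x + t * dot a v.
Proof.
move=> [a [b fE]]; exists a => x v t.
by rewrite !fE -/(dot a (x + _)) dotDr dotZr /dot; ring.
Qed.

Lemma affine_fun_conv f x y t :
  affine_fun f -> f (t *: x + (1 - t) *: y) = t * f x + (1 - t) * f y.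
Proof.
move=> /affine_fun_line[a fL].
have -> : t *: x + (1 - t) *: y = y + t *: (x - y).
  by rewrite scalerBl scale1r scalerBr addrCA.
have := fL y (x - y) 1; rewrite scale1r addrC subrK mul1r => ->.
by rewrite fL; ring.
Qed.

Lemma affine_fun_eq0_open f (O : set V) : affine_fun f -> open O -> O !=set0 ->
  (forall x, O x -> f x = 0) -> forall x, f x = 0.
Proof.
move=> /affine_fun_line[a fL] oO [c Oc] f0.
have a0 v : dot a v = 0.
  have line_cont : {for 0, continuous (fun t : R => c + t *: v)}.
    apply: cvgD; first exact: (@cst_continuous _ _ c 0).
    by apply: cvgZr_tmp; exact: cvg_id.
  have : nbhs (0 : R) (fun t => O (c + t *: v)).
    by apply: line_cont; rewrite /= scale0r addr0; apply: open_nbhs_nbhs.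
  move=> /nbhs_ballP[e /= e0 Be].
  have /Be Oe : ball (0 : R) e (e / 2).
    by rewrite -ball_normE /= sub0r normrN ger0_norm; lra.
  have := f0 _ Oe; rewrite fL (f0 c Oc) add0r => /eqP.
  by rewrite mulf_eq0 => /orP[/eqP|/eqP]; lra.
by move=> x; have := fL c (x - c) 1; rewrite scale1r addrC subrK a0 (f0 c Oc) mulr0 addr0.
Qed.

Lemma affine_fun_eq_open f h (O : set V) : affine_fun f -> affine_fun h ->
  open O -> O !=set0 -> (forall x, O x -> f x = h x) -> f = h.
Proof.
move=> fA hA oO O0 fh; apply/funext => x; apply/eqP; rewrite -subr_eq0; apply/eqP.
by apply: (affine_fun_eq0_open (affine_funB fA hA) oO O0) => y /fh /= ->; rewrite subrr.
Qed.

Lemma continuous_segment x y : continuous (fun t : R => t *: x + (1 - t) *: y).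
Proof.
move=> t; apply: cvgD; first by apply: cvgZr_tmp; exact: cvg_id.
by apply: cvgZr_tmp; apply: cvgB; [exact: cvg_cst | exact: cvg_id].
Qed.

End AffineFunctions.

Lemma poly_nonroot (R : numDomainType) (q : {poly R}) : q != 0 -> exists x, ~~ root q x.
Proof.
move=> q0; have uniq_nat : uniq [seq (i%:R : R) | i <- iota 0 (size q)].
  by rewrite map_inj_uniq ?iota_uniq // => i j /eqP; rewrite eqr_nat => /eqP.
have := contraNN (fun allq => max_poly_roots q0 allq uniq_nat).
rewrite size_map size_iota ltnn => /(_ isT) /allPn[x _ qx]; by exists x.
Qed.

Lemma exists_dot_neq0 (R : realType) n (I : finType) (w : I -> 'rV[R]_n) :
  exists v, forall e, w e != 0 -> dot (w e) v != 0.
Proof.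
pose q e := \sum_(i < n) ((w e) 0 i)%:P * 'X^i.
have qE e s : (q e).[s] = dot (w e) (\row_(i < n) s ^+ i).
  by rewrite horner_sum; apply: eq_bigr => i _; rewrite mxE hornerCM hornerXn.
have q0 e : w e != 0 -> q e != 0.
  apply: contra => /eqP qe0; apply/eqP/rowP => i; rewrite mxE.
  have : (q e)`_i = 0 by rewrite qe0 coef0.
  rewrite coef_sum (bigD1 i) //= big1 => [|j ji]; last first.
    by rewrite coefCM coefXn (inj_eq val_inj) eq_sym (negPf ji) mulr0.
  by rewrite coefCM coefXn eqxx mulr1 addr0.
have [s] : exists s, ~~ root (\prod_(e | w e != 0) q e) s.
  by apply: poly_nonroot; apply/prodf_neq0 => e /q0.
rewrite rootE horner_prod => /prodf_neq0 qs0.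
by exists (\row_(i < n) s ^+ i) => e /qs0; rewrite qE.
Qed.

Lemma near0_line_sign (R : realType) (c0 c1 : R) : (c0 != 0) || (c1 != 0) ->
  \forall t \near 0^'+, c0 + c1 * t != 0 /\ (0 < c0 -> 0 < c0 + c1 * t).
Proof.
have [-> /= c1_0|c0_0 _] := eqVneq c0 0.
  near=> t; have t_gt0 : 0 < t by near: t; exact: nbhs_right_gt.
  by split; [rewrite add0r mulf_neq0 // lt0r_neq0 | rewrite ltxx].
have cvg_c0 : c0 + c1 * t @[t --> 0^'+] --> c0.
  apply: cvg_at_right_filter; rewrite -[X in _ --> X]addr0 -[X in _ --> _ + X](mulr0 c1).
  by apply: cvgD; [exact: cvg_cst | apply: cvgMl_tmp; exact: cvg_id].
have [c0_gt0|c0_le0] := ltrP 0 c0; near=> t; split.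
- by near: t; exact: cvgr_neq0 cvg_c0 c0_0.
- by move=> _; near: t; exact: cvgr_gt cvg_c0 _ c0_gt0.
- by near: t; exact: cvgr_neq0 cvg_c0 c0_0.
- by [].
Unshelve. all: by end_near.
Qed.

(** * Closed covers and linear components *)

Lemma open_subset_interior (T : topologicalType) (O A : set T) :
  open O -> O `<=` A -> O `<=` A°.
Proof. by move=> oO sOA x Ox; apply: filterS sOA _; apply: open_nbhs_nbhs. Qed.

Lemma open_cover_meets_interior (T : topologicalType) (I : eqType) (s : seq I)
    (W : I -> set T) (O : set T) :
  (forall l, closed (W l)) -> open O -> O !=set0 ->
  (forall x, O x -> exists2 l, l \in s & W l x) ->
  exists2 l, l \in s & (O `&` (W l)°) !=set0.
Proof.
move=> cW; elim: s O => [|l0 s IH] O oO [x0 Ox0] sOW; first by have [] := sOW x0 Ox0.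
have [[x [Ox Wx]]|OW0] := pselect ((O `&` (W l0)°) !=set0).
  by exists l0; [rewrite mem_head | exists x].
have [[x1 [Ox1 Wx1]]|] := pselect ((O `&` ~` W l0) !=set0).
  have oO' : open (O `&` ~` W l0) by apply: openI => //; exact: closed_openC.
  have sOW' x : (O `&` ~` W l0) x -> exists2 l, l \in s & W l x.
    move=> [Ox nWx]; have [l] := sOW x Ox; rewrite inE => /orP[/eqP -> //|ls Wx].
    by exists l.
  have [l ls [x [[Ox _] Wx]]] := IH _ oO' (ex_intro _ x1 (conj Ox1 Wx1)) sOW'.
  by exists l; [rewrite inE ls orbT | exists x].
move=> /nonemptyPn/classical_sets.subsets_disjoint sOW0; exfalso; apply: OW0.
by exists x0; split => //; exact: open_subset_interior sOW0 _ Ox0.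
Qed.

Lemma connected_closed_partition (T : topologicalType) (I : finType) (A : set T)
    (C : I -> set T) i :
  connected A -> (forall j, closed (C j)) -> (forall t, A t -> exists j, C j t) ->
  (forall t j j', A t -> C j t -> C j' t -> j = j') -> (A `&` C i) !=set0 -> A `<=` C i.
Proof.
move=> cA cC covA uniqA Ai0; suff <- : A `&` C i = A by move=> t [].
apply: cA => //; last by exists (C i).
exists (~` \bigcup_(j in [set j | j != i]) C j).
  by apply/closed_openC/closed_bigcup => [|j _]; [exact: finite_finset | exact: cC].
apply/seteqP; split => t [At Ct]; split => //.
  by move=> [j /= ji Cjt]; move: ji; rewrite (uniqA t j i) ?eqxx.
have [j Cjt] := covA t At; have [<- //|ji] := eqVneq j i.
by exfalso; apply: Ct; exists j.
Qed.

Section ClosedCovers.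
Variables (R : realType) (n : nat) (p : 'rV[R]_n -> R).
Local Notation V := 'rV[R]_n.

Lemma CPWL_min_cover_size : is_CPWL p -> exists m, min_cover_size p m.
Proof.
move=> [m0 [U0 cU0]].
have [m [U cU] min_m] :=
  ex_minn_Prop (P := fun m => exists U : 'I_m -> set V, closed_cover p U) (ex_intro _ U0 cU0).
by exists m; split => [|m' U' cU']; [exists U | apply: min_m; exists U'].
Qed.

Lemma closed_cover_mem m (U : 'I_m -> set V) : closed_cover p U -> forall x, exists i, U i x.
Proof.
by move=> [_ [covU _]] x; have : [set: V] x by []; rewrite -covU => -[i _ Uix]; exists i.
Qed.

Lemma closed_cover_eq_closed m (U : 'I_m -> set V) f :
  closed_cover p U -> affine_fun f -> closed [set x | p x = f x].
Proof.
move=> cU fA; have [Uc [_ Uaff]] := cU; have [h hP] := choice Uaff.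
have -> : [set x | p x = f x] =
    \bigcup_(i in [set: 'I_m]) (U i `&` [set x | (h i \- f) x = 0]).
  apply/seteqP; split => [x /= pf | x [i _ [Uix /= /eqP]]].
    have [i Uix] := closed_cover_mem cU x.
    by exists i => //; split => //=; rewrite -(hP i).2 // pf subrr.
  by rewrite subr_eq0 => /eqP <-; apply: (hP i).2.
apply: closed_bigcup; first exact: finite_finset.
move=> i _; apply: closedI; first exact: Uc.
apply: (@preimage_closed _ _ (h i \- f) [set y | y = 0]); last exact: closed_eq.
by move=> x _; apply: affine_fun_continuous; apply: affine_funB (hP i).1 fA.
Qed.

Lemma linear_component_at m (U : 'I_m -> set V) x :
  min_cover_size p m -> closed_cover p U -> exists2 f, linear_component p f & p x = f x.
Proof.
move=> minm cU; have [i Uix] := closed_cover_mem cU x.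
have [f [fA pf]] := cU.2.2 i; exists f; last exact: pf.
split => //; exists m, U, [set i]%SET; do 3!split => //.
  by apply/set0Pn; exists i; rewrite inE.
by move=> y [j /=]; rewrite !inE => /eqP -> /pf ->.
Qed.

Lemma closed_cover_lift m (U : 'I_m.+1 -> set V) i :
  closed_cover p U -> (forall x, exists2 j, j != i & U j x) ->
  closed_cover p (fun j => U (lift i j)).
Proof.
move=> [Uc [_ Uaff]] others; do 2!split => //; apply/seteqP; split => // x _.
have [j ji Ujx] := others x; have [j' Ej|Ej] := unliftP i j; last by rewrite Ej eqxx in ji.
by exists j' => //; rewrite -Ej.
Qed.

Lemma min_cover_interior m (U : 'I_m -> set V) :
  min_cover_size p m -> closed_cover p U -> forall i, (U i)° !=set0.
Proof.
move=> [_ minm] cU i; apply: contrapT => Ui0.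
have others x : exists2 j, j != i & U j x.
  apply: contrapT => nx; apply: Ui0; exists x.
  have : nbhs x (~` \bigcup_(j in [set j | j != i]) U j).
    apply: open_nbhs_nbhs; split; last by move=> [j /= ji Ujx]; apply: nx; exists j.
    by apply/closed_openC/closed_bigcup => [|j _]; [exact: finite_finset | exact: cU.1].
  apply: filterS => y nUy; have [j Ujy] := closed_cover_mem cU y.
  by case: (eqVneq j i) Ujy => [-> //|ji Ujy]; exfalso; apply: nUy; exists j.
move: U i cU Ui0 others minm; case: m => [|m] U i cU _ others minm; first by have := ltn_ord i.
by have := minm _ _ (closed_cover_lift cU others); rewrite ltnn.
Qed.

Lemma linear_component_piece m (W : 'I_m -> set V) f :
  linear_component p f -> closed_cover p W ->
  exists l, (W l)° !=set0 /\ forall x, W l x -> p x = f x.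
Proof.
move=> [fA [m' [U [S [minm' [cU [S0 fp]]]]]]] cW; have [i iS] := set0Pn _ S0.
have [|l _ [x [Ux Wx]]] := open_cover_meets_interior (s := enum 'I_m) cW.1
    (@open_interior _ (U i)) (min_cover_interior minm' cU i).
  by move=> x _; have [l Wl] := closed_cover_mem cW x; exists l; rewrite ?mem_enum.
have [h [hA ph]] := cW.2.2 l.
have fh : f = h.
  apply: (affine_fun_eq_open fA hA (O := (U i)° `&` (W l)°)).
  - by apply: openI; exact: open_interior.
  - by exists x.
  move=> y [/interior_subset Uy /interior_subset Wy]; rewrite -ph // fp //.
  by exists i; rewrite /= ?inE.
by exists l; split; [exists x | move=> y Wy; rewrite fh ph].
Qed.

Lemma card_components_le_cover k (g : 'I_k -> V -> R) m (W : 'I_m -> set V) :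
  injective g -> (forall r, linear_component p (g r)) -> closed_cover p W -> (k <= m)%N.
Proof.
move=> ginj gC cW; have [l lP] := choice (fun r => linear_component_piece (gC r) cW).
suff /leq_card : injective l by rewrite !card_ord.
move=> r1 r2 l12; apply: ginj; have [W0 p1] := lP r1; have [_ p2] := lP r2.
apply: (affine_fun_eq_open (gC r1).1 (gC r2).1 (@open_interior _ _) W0).
by move=> x /interior_subset Wx; rewrite -p1 // p2 // -l12.
Qed.

End ClosedCovers.

(** * Cells of the arrangement of the components *)

Section Cells.
Variables (R : realType) (n k : nat).
Local Notation V := 'rV[R]_n.
Variables (a : 'I_k -> V) (b : 'I_k -> R) (g : 'I_k -> V -> R).
Hypothesis gE : forall r x, g r x = dot (a r) x + b r.

Lemma g_affine r : affine_fun (g r).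
Proof. by exists (a r), (b r); exact: gE. Qed.

Definition generic (y : V) := forall i j, i != j -> g i y != g j y.

Definition pattern (y : V) : {ffun 'I_k * 'I_k -> bool} := [ffun e => g e.1 y < g e.2 y].

Definition patterns : {set {ffun 'I_k * 'I_k -> bool}} :=
  [set s | `[< exists2 y, generic y & pattern y = s >]]%SET.

(* For s = pattern y with y generic, the closure of the region of the
   arrangement of the hyperplanes g i = g j containing y. *)
Definition cell (s : {ffun 'I_k * 'I_k -> bool}) : set V :=
  [set x | forall i j, s (i, j) -> g i x <= g j x].

Lemma patternsP s : reflect (exists2 y, generic y & pattern y = s) (s \in patterns).
Proof. by rewrite inE; apply: (iffP (asboolP _)). Qed.

Lemma generic_ltNgt y i j : generic y -> i != j -> (g i y < g j y) = ~~ (g j y < g i y).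
Proof.
move=> gen_y ij; case: (ltrgtP (g i y) (g j y)) => // gij.
by have := gen_y i j ij; rewrite gij eqxx.
Qed.

Lemma cell_closed s : closed (cell s).
Proof.
have -> : cell s = \bigcap_(e in [set e | s e]) [set x | 0 <= (g e.2 \- g e.1) x].
  apply/seteqP; split => [x cx [i j] /= sij | x cx i j sij].
    by rewrite subr_ge0; exact: cx.
  by rewrite -subr_ge0; exact: (cx (i, j)).
apply: closed_bigI => e _.
apply: (@preimage_closed _ _ (g e.2 \- g e.1) [set y | 0 <= y]); last exact: closed_ge.
by move=> x _; apply/affine_fun_continuous/affine_funB; exact: g_affine.
Qed.

Lemma cell_convex s : convex_set_R (cell s).
Proof.
move=> x y t cx cy t0 t1 i j sij.
rewrite !(affine_fun_conv _ _ _ (g_affine _)).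
by have := cx i j sij; have := cy i j sij; nra.
Qed.

Lemma segment_lt y x t i j : cell (pattern y) x -> 0 <= t -> t < 1 ->
  g i y < g j y -> g i (t *: x + (1 - t) *: y) < g j (t *: x + (1 - t) *: y).
Proof.
move=> cx t0 t1 ltij; have := cx i j; rewrite ffunE => /(_ ltij) leij.
rewrite !(affine_fun_conv _ _ _ (g_affine _)); nra.
Qed.

Lemma segment_generic y x t : generic y -> cell (pattern y) x -> 0 <= t -> t < 1 ->
  generic (t *: x + (1 - t) *: y).
Proof.
move=> gen_y cx t0 t1 i j ij; case: (ltrgtP (g i y) (g j y)) => [lt|gt|eq].
- by rewrite lt_eqF // segment_lt.
- by rewrite gt_eqF // segment_lt.
- by have := gen_y i j ij; rewrite eq eqxx.
Qed.

Lemma cell_affine (p : V -> R) s :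
  (forall x, exists r, p x = g r x) -> (forall r, closed [set x | p x = g r x]) ->
  s \in patterns -> exists r, forall x, cell s x -> p x = g r x.
Proof.
move=> p_at p_closed /patternsP[y gen_y <-{s}]; have [r pr] := p_at y.
exists r => x cx; pose seg t : V := t *: x + (1 - t) *: y.
pose A := [set` `[0, 1[] : set R.
have AE t : A t = (0 <= t < 1) by rewrite /A /= in_itv.
pose C r' := seg @^-1` [set z | p z = g r' z].
have C_closed r' : closed (C r').
  by apply: preimage_closed => // t _; exact: continuous_segment.
have AC : A `<=` C r.
  apply: connected_closed_partition => //.
  - by apply/connected_intervalP; exact: interval_is_interval.
  - by move=> t _; exact: p_at.
  - move=> t i j; rewrite AE => /andP[t0 t1] Ci Cj; apply/eqP; apply: contraT => ij.
    by have := segment_generic gen_y cx t0 t1 ij; rewrite -Ci -Cj eqxx.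
  - exists 0; split; first by rewrite AE lexx ltr01.
    by rewrite /C /seg /= scale0r add0r subr0 scale1r.
have : C r 1.
  apply: (@closed_cvg _ _ (1^'-) _ id _ (C_closed r)); last first.
    exact: cvg_at_left_filter cvg_id.
  near=> t; apply: AC; rewrite AE; apply/andP; split; last by near: t; exact: nbhs_left_lt.
  by apply: ltW; near: t; exact: nbhs_left_gt.
by rewrite /C /seg /= scale1r subrr scale0r addr0.
Unshelve. all: by end_near.
Qed.

Hypothesis g_inj : injective g.

Lemma cells_cover x : exists2 s, s \in patterns & cell s x.
Proof.
have [v v_gen] := exists_dot_neq0 (fun e : 'I_k * 'I_k => a e.2 - a e.1).
pose gap e t := g e.2 (x + t *: v) - g e.1 (x + t *: v).
have gapE e t : gap e t = (g e.2 x - g e.1 x) + dot (a e.2 - a e.1) v * t.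
  by rewrite /gap !gE !dotDr !dotZr dotBl; ring.
have gap_nonconst e : e.1 != e.2 ->
    (g e.2 x - g e.1 x != 0) || (dot (a e.2 - a e.1) v != 0).
  move=> ne; have [aE|ane] := eqVneq (a e.1) (a e.2); last first.
    by rewrite v_gen ?orbT // subr_eq0 eq_sym.
  apply/orP; left; rewrite subr_eq0; apply: contra ne => /eqP gx.
  apply/eqP/g_inj/funext => z.
  by move: gx; rewrite !gE aE => /addrI ->.
have : \forall t \near 0^'+, forall e : 'I_k * 'I_k,
    e.1 != e.2 -> gap e t != 0 /\ (0 < gap e 0 -> 0 < gap e t).
  apply: filter_forall => e; have [_|ne] := eqVneq e.1 e.2; first exact: nearW.
  by apply: filterS (near0_line_sign (gap_nonconst e ne)) => t; rewrite !gapE mulr0 addr0.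
move=> /filter_ex[t gap_t]; exists (pattern (x + t *: v)).
  apply/patternsP; exists (x + t *: v) => // i j ij.
  by have [+ _] := gap_t (i, j) ij; rewrite /gap subr_eq0 eq_sym.
move=> i j; rewrite ffunE /= => ltij; rewrite leNgt; apply/negP => ltji.
have ji : (j, i).1 != (j, i).2 by apply: contraTneq ltji => /= ->; rewrite ltxx.
have [_] := gap_t (j, i) ji; rewrite /gap !scale0r !addr0 !subr_gt0 => /(_ ltji).
by rewrite ltNge (ltW ltij).
Qed.

Lemma card_patterns_fact : (#|patterns| <= k`!)%N.
Proof.
pose order (s : 'S_k) : {ffun 'I_k * 'I_k -> bool} := [ffun e => (s e.1 < s e.2)%N].
suff sub : patterns \subset order @: [set: 'S_k]%SET.
  apply: leq_trans (subset_leq_card sub) _; apply: leq_trans (leq_imset_card _ _) _.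
  by rewrite cardsT card_Sn.
apply/subsetP => _ /patternsP[y gen_y <-].
have y_inj : injective (g^~ y).
  by move=> i j gij; apply/eqP; apply: contraT => /gen_y; rewrite gij eqxx.
have [s sE] := exists_perm_lt y_inj; apply/imsetP; exists s => //.
by apply/ffunP => e; rewrite !ffunE sE.
Qed.

Lemma cells_convex_cover (p : V -> R) :
  (forall x, exists r, p x = g r x) -> (forall r, closed [set x | p x = g r x]) ->
  convex_cover p (fun j : 'I_#|patterns| => cell (enum_val j)).
Proof.
move=> p_at p_closed; split; last by move=> j; exact: cell_convex.
split; first by move=> j; exact: cell_closed.
split.
  apply/seteqP; split => // x _; have [s sP cx] := cells_cover x.
  by exists (enum_rank_in sP s) => //; rewrite /= enum_rankK_in.
move=> j; have [r pr] := cell_affine p_at p_closed (enum_valP j).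
by exists (g r); split; [exact: g_affine | exact: pr].
Qed.

End Cells.

(** * Counting the cells *)

Lemma mul_sign_le0 (R : realDomainType) (d u : R) : u != 0 -> (d < 0) = (0 < u) ->
  d * u <= 0 /\ (d != 0 -> d * u < 0).
Proof.
move=> u0; case: (ltrgtP d 0) => [d_lt0 /esym u_gt0 | d_gt0 /esym/negbT | ->].
- by split => [|_]; nra.
- by rewrite -leNgt le_eqVlt (negPf u0) /= => u_lt0; split => [|_]; nra.
- by rewrite mul0r lexx.
Qed.

Section PatternTraces.
Variables (R : realType) (n k : nat).
Local Notation V := 'rV[R]_n.
Variables (a : 'I_k -> V) (b : 'I_k -> R) (g : 'I_k -> V -> R).
Hypothesis gE : forall r x, g r x = dot (a r) x + b r.

(* One pair per hyperplane g i = g j. *)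
Definition edges := [set e : 'I_k * 'I_k | (e.1 < e.2)%N]%SET.

Definition trace (s : {ffun 'I_k * 'I_k -> bool}) := [set e in edges | s e]%SET.

Lemma card_traces : #|trace @: patterns g| = #|patterns g|.
Proof.
apply: card_in_imset => _ _ /patternsP[y1 gen1 <-] /patternsP[y2 gen2 <-] tr12.
have ltE (i j : 'I_k) : (i < j)%N -> (g i y1 < g j y1) = (g i y2 < g j y2).
  by move=> ij; move/setP: tr12 => /(_ (i, j)); rewrite !inE /= ij !ffunE.
apply/ffunP => -[i j]; rewrite !ffunE /=; case: (ltngtP i j) => [ij|ji|/val_inj ->].
- exact: ltE.
- have ij : i != j by rewrite neq_ltn ji orbT.
  by rewrite (generic_ltNgt gen1 ij) (generic_ltNgt gen2 ij) ltE.
- by rewrite !ltxx.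
Qed.

Lemma card_edges : (#|edges| <= (k ^ 2 - k) %/ 2)%N.
Proof.
pose pair (e : 'I_k * 'I_k) := [set e.1; e.2]%SET.
have pair_bounds (u : 'I_k * 'I_k) x :
    x \in pair u -> (u.1 < u.2)%N -> (u.1 <= x <= u.2)%N.
  by rewrite !inE => /orP[]/eqP-> lt_u; rewrite leqnn ltnW.
have pair_inj : {in edges &, injective pair}.
  move=> e u; rewrite !inE => lt_e lt_u pE.
  have /pair_bounds/(_ lt_u)/andP[le_ue1 _] : e.1 \in pair u by rewrite -pE !inE eqxx.
  have /pair_bounds/(_ lt_u)/andP[_ le_eu2] : e.2 \in pair u by rewrite -pE !inE eqxx orbT.
  have /pair_bounds/(_ lt_e)/andP[le_eu1 _] : u.1 \in pair e by rewrite pE !inE eqxx.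
  have /pair_bounds/(_ lt_e)/andP[_ le_ue2] : u.2 \in pair e by rewrite pE !inE eqxx orbT.
  case: e u {lt_e lt_u pE} => [i j] [i' j'] /= in le_ue1 le_eu2 le_eu1 le_ue2 *.
  by congr (_, _); apply/val_inj/eqP; rewrite eqn_leq ?le_ue1 ?le_eu1 ?le_eu2 ?le_ue2.
have sub2 : pair @: edges \subset [set B : {set 'I_k} | #|B| == 2]%SET.
  apply/subsetP => B /imsetP[[i j]]; rewrite !inE /= => ij ->.
  by rewrite cards2 neq_ltn ij.
rewrite -(card_in_imset pair_inj); apply: leq_trans (subset_leq_card sub2) _.
by rewrite card_draws card_ord bin2 -divn2 -subn1 mulnBr muln1 mulnn.
Qed.

Lemma kernel_gaps_const N (ev : 'I_N -> 'I_k * 'I_k) (d : 'rV[R]_N) :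
  d *m (\matrix_(r, i) (a (ev r).2 - a (ev r).1) 0 i) = 0 -> forall y,
  \sum_r d 0 r * (g (ev r).2 y - g (ev r).1 y) = \sum_r d 0 r * (b (ev r).2 - b (ev r).1).
Proof.
move=> dM y.
have gapE r : g (ev r).2 y - g (ev r).1 y =
    dot (a (ev r).2 - a (ev r).1) y + (b (ev r).2 - b (ev r).1).
  by rewrite !gE dotBl; ring.
under eq_bigr do rewrite gapE mulrDr.
rewrite big_split /= [X in X + _](_ : _ = 0) ?add0r //.
rewrite /dot; under eq_bigr do rewrite mulr_sumr; rewrite exchange_big big1 //= => i _.
move/matrixP/(_ 0 i): dM; rewrite !mxE => Mi.
rewrite -[RHS](mul0r (y 0 i)) -[in RHS]Mi mulr_suml; apply: eq_bigr => r _.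
by rewrite !mxE mulrA.
Qed.

Section ShatteredSet.
Variable A : {set 'I_k * 'I_k}.
Hypothesis shA : shatters (trace @: patterns g) A.
Let ev (r : 'I_#|A|) : 'I_k * 'I_k := enum_val r.

Lemma shattered_comb_lt0 (d : 'rV[R]_#|A|) : d != 0 ->
  exists y, \sum_r d 0 r * (g (ev r).2 y - g (ev r).1 y) < 0.
Proof.
move=> d0; pose B := [set ev r | r in [set r | d 0 r < 0]]%SET.
have sBA : B \subset A by apply/subsetP => _ /imsetP[r _ ->]; exact: enum_valP.
have /shattersP/(_ B sBA)[_ /imsetP[_ /patternsP[y gen_y <-] ->] trB] := shA.
have /shatters_sub[_ /imsetP[s _ ->] sAtr] := shA.
have ev_edge r : ((ev r).1 < (ev r).2)%N.
  by have := subsetP sAtr _ (enum_valP r); rewrite !inE => /andP[].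
have signE r : (d 0 r < 0) = (0 < g (ev r).2 y - g (ev r).1 y).
  rewrite subr_gt0; have <- : (ev r \in B) = (d 0 r < 0).
    by rewrite (mem_imset _ _ enum_val_inj) inE.
  by rewrite -trB !inE ev_edge enum_valP ffunE andbT.
have gap0 r : g (ev r).2 y - g (ev r).1 y != 0.
  by rewrite subr_eq0 gen_y // eq_sym -val_eqE neq_ltn ev_edge.
have /rV0Pn[r0 dr0] := d0.
exists y; rewrite (bigD1 r0) //=.
have := (mul_sign_le0 (gap0 r0) (signE r0)).2 dr0.
have : \sum_(r | r != r0) d 0 r * (g (ev r).2 y - g (ev r).1 y) <= 0.
  by apply: sumr_le0 => r _; exact: (mul_sign_le0 (gap0 r) (signE r)).1.
lra.
Qed.

Lemma shatters_traces_card : (#|A| <= n)%N.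
Proof.
pose M := \matrix_(r, i) (a (ev r).2 - a (ev r).1) 0 i.
suff /eqP <- : row_free M by exact: rank_leq_col.
apply: inj_row_free => d dM; apply/eqP; apply: contraT => d0.
have [y1] := shattered_comb_lt0 d0; rewrite (kernel_gaps_const dM).
have [|y2] := shattered_comb_lt0 (d := - d); first by rewrite oppr_eq0.
rewrite (@kernel_gaps_const _ _ (- d)) ?mulNmx ?dM ?oppr0 //.
under eq_bigr do rewrite mxE mulNr; rewrite sumrN; lra.
Qed.

End ShatteredSet.

Lemma card_patterns_sauer : (#|patterns g| <= \sum_(i < n.+1) 'C((k ^ 2 - k) %/ 2, i))%N.
Proof.
have sub_edges S : S \in trace @: patterns g -> S \subset edges.
  by move=> /imsetP[s _ ->]; apply/subsetP => e; rewrite inE => /andP[].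
rewrite -card_traces; apply: leq_trans (sauer_shelah sub_edges shatters_traces_card) _.
by apply: leq_sum => i _; apply: leq_bin2l; exact: card_edges.
Qed.

End PatternTraces.

Theorem lemma1 (R : realType) (n k : nat) (p : 'rV[R]_n -> R) :
  in_P k p ->
  exists m0 : nat,
    (exists U : 'I_m0 -> set 'rV[R]_n, convex_cover p U) /\
    (forall m (U : 'I_m -> set 'rV[R]_n), convex_cover p U -> (m0 <= m)%N) /\
    (k <= m0)%N /\ (m0 <= phi n k)%N.
Proof.
move=> [cpwl [g [g_inj gC]]].
have gLC r : linear_component p (g r) by apply/gC; exists r.
have /choice[ab abE] : forall r, exists ab : 'rV[R]_n * R, forall x, g r x = dot ab.1 x + ab.2.
  by move=> r; have [[a [b gE]] _] := gLC r; exists (a, b).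
have [m minm] := CPWL_min_cover_size cpwl; have [U cU] := minm.1.
have p_at x : exists r, p x = g r x.
  by have [f /gC[r ->] pf] := linear_component_at x minm cU; exists r.
have p_closed r := closed_cover_eq_closed cU (g_affine abE r).
have cW := cells_convex_cover abE g_inj p_at p_closed.
pose has_cover m := exists W : 'I_m -> set 'rV[R]_n, convex_cover p W.
have [m0 [W0 cW0] min_m0] := ex_minn_Prop (P := has_cover) (ex_intro _ _ cW).
have le_m0 := min_m0 _ (ex_intro _ _ cW).
exists m0; split; first by exists W0.
split; first by move=> m' W cW'; apply: min_m0; exists W.
split; first exact: card_components_le_cover g_inj gLC cW0.1.
rewrite leq_min (leq_trans le_m0 (card_patterns_sauer abE)).
exact: leq_trans le_m0 (card_patterns_fact _).
Qed.
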